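(* For the finite-alphabet cognitive MAC $P_{Y|X_1,X_2}$ with the matched metric $q(x_1,x_2,y)=\log P_{Y|X_1,X_2}(y|x_1,x_2)$, one has $\mathcal R^{sup}_{cog}=\mathcal R^{bin}_{cog}=\mathcal R^{match}_{cog}$, where $$\mathcal R^{match}_{cog}=\bigcup_{P_{X_1,X_2}}\{(R_1,R_2): R_2\le I_P(X_2;Y|X_1),\ R_1+R_2\le I_P(X_1,X_2;Y)\},\quad P=P_{X_1,X_2}P_{Y|X_1,X_2};$$ $\mathcal R^{sup}_{cog}$ is the closure of the convex hull of $\bigcup_P\tilde{\mathcal R}^{sup}_{cog}(P)$ with $\tilde{\mathcal R}^{sup}_{cog}(P)=\{(R_1,R_2):R_2\le\min_{\tilde P\in\mathcal L_2(P)}I_{\tilde P}(X_2;Y|X_1),\ R_1+R_2\le\min_{\tilde P\in\mathcal L_0(P):I_{\tilde P}(X_1;Y)\le R_1}I_{\tilde P}(X_1,X_2;Y)\}$; and $\mathcal R^{bin}_{cog}$ is the closure of the convex hull of $\bigcup_P\mathcal R^{bin,*}_{cog}(P)$, $\mathcal R^{bin,*}_{cog}(P)$ being the set of $(R_1,R_2)$ for which there exist $R_{1,a},R_{1,b}\ge0$ with $R_1=R_{1,a}+R_{1,b}$, $R_{1,a}\le R_1'(P)$, $R_{1,b}+R_2\le R_2'(P)$, and either $R_{1,a}\le R_1''(P,R_{1,b}+R_2)$ or $R_{1,b}+R_2\le R_2''(P,R_{1,a})$ (all unions over $P=P_{X_1,X_2}P_{Y|X_1,X_2}$).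
   Context: For a distribution $Q$ on $\mathcal X_1\times\mathcal X_2\times\mathcal Y$: $\mathcal G_q(Q)=\{f: f_{X_1,X_2}=Q_{X_1,X_2},\ \mathbb E_f q(X_1,X_2,Y)\ge\mathbb E_Q q(X_1,X_2,Y)\}$; $\mathcal L_1(Q)=\{f\in\mathcal G_q(Q):f_{X_2,Y}=Q_{X_2,Y}\}$; $\mathcal L_2(Q)=\{f\in\mathcal G_q(Q):f_{X_1,Y}=Q_{X_1,Y}\}$; $\mathcal L_0(Q)=\{f\in\mathcal G_q(Q):f_Y=Q_Y\}$. $R_1'(P)=\min_{\tilde P\in\mathcal L_1(P)}I_{\tilde P}(X_1;Y,X_2)$; $R_2'(P)=\min_{\tilde P\in\mathcal L_2(P)}I_{\tilde P}(X_2;Y|X_1)$; $R_1''(P,R_2)=\min_{\tilde P\in\mathcal L_0(P)}[I_{\tilde P}(X_1;Y)+|I_{\tilde P}(X_2;Y|X_1)-R_2|^+]$; $R_2''(P,R_1)=\min_{\tilde P\in\mathcal L_0(P)}[I_{\tilde P}(X_2;Y)-I_{\tilde P}(X_2;X_1)+|I_{\tilde P}(X_1;Y,X_2)-R_1|^+]$; $|t|^+=\max\{0,t\}$. *)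

From HB Require Import structures.
From mathcomp Require Import all_boot all_order all_algebra.
From mathcomp Require Import all_classical all_reals all_analysis.
Set Implicit Arguments. Unset Strict Implicit. Unset Printing Implicit Defensive.
Import Order.TTheory GRing.Theory Num.Theory numFieldNormedType.Exports.
Local Open Scope classical_set_scope.
Local Open Scope ring_scope.

Definition px1 {X1 X2 Y : finType} (t : (X1 * X2 * Y)%type) : X1 := t.1.1.
Definition px2 {X1 X2 Y : finType} (t : (X1 * X2 * Y)%type) : X2 := t.1.2.
Definition py  {X1 X2 Y : finType} (t : (X1 * X2 * Y)%type) : Y := t.2.
Definition px12 {X1 X2 Y : finType} (t : (X1 * X2 * Y)%type) : (X1 * X2)%type := t.1.

Definition is_dist {R : realType} {T : finType} (f : T -> R) : Prop :=
  (forall t, 0 <= f t) /\ \sum_(t : T) f t = 1.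

Definition marg {R : realType} {T U : finType} (f : T -> R) (g : T -> U) (u : U) : R :=
  \sum_(s : T | g s == u) f s.

Definition pm {R : realType} {T U : finType} (f : T -> R) (g : T -> U) (t : T) : R :=
  marg f g (g t).

Definition MI {R : realType} {T A B : finType} (f : T -> R) (gA : T -> A) (gB : T -> B) : R :=
  \sum_(t : T) f t * ln (pm f (fun s => (gA s, gB s)) t / (pm f gA t * pm f gB t)).

Definition CMI {R : realType} {T A B C : finType} (f : T -> R)
  (gA : T -> A) (gB : T -> B) (gC : T -> C) : R :=
  \sum_(t : T) f t * ln (pm f (fun s => (gA s, gB s, gC s)) t * pm f gC t /
                         (pm f (fun s => (gA s, gC s)) t * pm f (fun s => (gB s, gC s)) t)).

Definition is_channel {R : realType} {X1 X2 Y : finType} (W : X1 -> X2 -> Y -> R) : Prop :=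
  (forall a b y, 0 <= W a b y) /\ (forall a b, \sum_(y : Y) W a b y = 1).

Definition joint {R : realType} {X1 X2 Y : finType} (PX : (X1 * X2)%type -> R)
  (W : X1 -> X2 -> Y -> R) (t : (X1 * X2 * Y)%type) : R :=
  PX t.1 * W t.1.1 t.1.2 t.2.

Definition qmatch {R : realType} {X1 X2 Y : finType} (W : X1 -> X2 -> Y -> R)
  (t : (X1 * X2 * Y)%type) : \bar R :=
  if 0 < W t.1.1 t.1.2 t.2 then (ln (W t.1.1 t.1.2 t.2))%:E else -oo%E.

(* E_f q, with the convention 0 * (-oo) = 0 *)
Definition Eq {R : realType} {X1 X2 Y : finType} (W : X1 -> X2 -> Y -> R)
  (f : (X1 * X2 * Y)%type -> R) : \bar R :=
  (\sum_(t : (X1 * X2 * Y)%type) (if f t == 0%R then 0 else (f t)%:E * qmatch W t))%E.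

Section Sets.
Context {R : realType} {X1 X2 Y : finType}.
Notation T := (X1 * X2 * Y)%type.

Definition Gq (W : X1 -> X2 -> Y -> R) (Q : T -> R) : set (T -> R) :=
  [set f | is_dist f /\ marg f px12 = marg Q px12 /\ (Eq W Q <= Eq W f)%E].
Definition L1 W Q : set (T -> R) :=
  [set f | Gq W Q f /\ marg f (fun t => (px2 t, py t)) = marg Q (fun t => (px2 t, py t))].
Definition L2 W Q : set (T -> R) :=
  [set f | Gq W Q f /\ marg f (fun t => (px1 t, py t)) = marg Q (fun t => (px1 t, py t))].
Definition L0 W Q : set (T -> R) :=
  [set f | Gq W Q f /\ marg f py = marg Q py].

(* min over a set (as an infimum in the extended reals; +oo on the empty set) *)
Definition emin (S : set (T -> R)) (F : (T -> R) -> R) : \bar R :=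
  ereal_inf [set (F f)%:E | f in S].

Definition R1' W P := emin (L1 W P) (fun f => MI f px1 (fun t => (py t, px2 t))).
Definition R2' W P := emin (L2 W P) (fun f => CMI f px2 py px1).
Definition R1'' W P (r2 : R) := emin (L0 W P)
  (fun f => MI f px1 py + Num.max 0 (CMI f px2 py px1 - r2)).
Definition R2'' W P (r1 : R) := emin (L0 W P)
  (fun f => MI f px2 py - MI f px2 px1 + Num.max 0 (MI f px1 (fun t => (py t, px2 t)) - r1)).

Definition Rmatch (W : X1 -> X2 -> Y -> R) : set (R * R) :=
  [set r | exists PX : (X1 * X2)%type -> R, is_dist PX /\ 0 <= r.1 /\ 0 <= r.2 /\
     r.2 <= CMI (joint PX W) px2 py px1 /\ r.1 + r.2 <= MI (joint PX W) px12 py].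

Definition Rsup_tilde W (P : T -> R) : set (R * R) :=
  [set r | 0 <= r.1 /\ 0 <= r.2 /\
     ((r.2)%:E <= emin (L2 W P) (fun f => CMI f px2 py px1))%E /\
     ((r.1 + r.2)%:E <= emin [set f | L0 W P f /\ (MI f px1 py <= r.1)%R]
                            (fun f => MI f px12 py))%E].

Definition Rbin_star W (P : T -> R) : set (R * R) :=
  [set r | exists r1a r1b : R, 0 <= r1a /\ 0 <= r1b /\ 0 <= r.2 /\ r.1 = r1a + r1b /\
     (r1a%:E <= R1' W P)%E /\ ((r1b + r.2)%:E <= R2' W P)%E /\
     ((r1a%:E <= R1'' W P (r1b + r.2))%E \/ ((r1b + r.2)%:E <= R2'' W P r1a)%E)].

End Sets.

Definition conv2 {R : realType} (S : set (R * R)) : set (R * R) :=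
  [set p | exists n (w : 'I_n -> R) (z : 'I_n -> (R * R)%type),
     (forall i, 0 <= w i) /\ \sum_(i < n) w i = 1 /\ (forall i, S (z i)) /\
     p = (\sum_(i < n) w i * (z i).1, \sum_(i < n) w i * (z i).2)].

Definition Rsup {R : realType} {X1 X2 Y : finType} (W : X1 -> X2 -> Y -> R) : set (R * R) :=
  closure (conv2 [set r | exists PX : (X1 * X2)%type -> R,
                             is_dist PX /\ Rsup_tilde W (joint PX W) r]).

Definition Rbin {R : realType} {X1 X2 Y : finType} (W : X1 -> X2 -> Y -> R) : set (R * R) :=
  closure (conv2 [set r | exists PX : (X1 * X2)%type -> R,
                             is_dist PX /\ Rbin_star W (joint PX W) r]).

From mathcomp Require Import all_boot all_order all_algebra.
From mathcomp Require Import all_classical all_reals all_analysis.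
From mathcomp Require Import ring lra.
Set Implicit Arguments. Unset Strict Implicit. Unset Printing Implicit Defensive.
Import Order.TTheory GRing.Theory Num.Theory numFieldNormedType.Exports.
Local Open Scope classical_set_scope.
Local Open Scope ring_scope.

(* With the matched metric, Gibbs's inequality turns the metric constraint of [Gq P] into
   H_f(Y|X1,X2) <= H_P(Y|X1,X2) for every f with the input marginal of P.  Together with the
   marginal constraints of L0, L1 and L2, this makes every information quantity minimised in
   R1', R2', R1'' and R2'' at least its value at P, which itself lies in all these sets; so both
   the superposition region and the binning region at P coincide with the matched region at P.
   For a fixed channel, I(X2;Y|X1) and I(X1,X2;Y) are concave in P_{X1,X2} (log-sum
   inequality), so the union of the matched regions is convex, and it is closed because
   entropies are continuous on the compact simplex; hence closed convex hulls change nothing. *)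

Section Marginals.
Context {R : realType} {T : finType}.
Implicit Types f : T -> R.

Lemma marg_ge0 {U : finType} f (g : T -> U) u : (forall t, 0 <= f t) -> 0 <= marg f g u.
Proof. by move=> f0; apply: sumr_ge0. Qed.

Lemma le_pm {U : finType} f (g : T -> U) t : (forall t, 0 <= f t) -> f t <= pm f g t.
Proof. by move=> f0; rewrite /pm /marg (bigD1 t) //= lerDl sumr_ge0. Qed.

Lemma pm_id f t : pm f id t = f t.
Proof. by rewrite /pm /marg big_pred1_eq. Qed.

Lemma marg_comp {U V : finType} f (g : T -> U) (h : U -> V) v :
  marg f (fun t => h (g t)) v = \sum_(u | h u == v) marg f g u.
Proof.
rewrite /marg (partition_big g (fun u => h u == v)) /=; last by [].
apply: eq_bigr => u huv; apply: eq_bigl => t.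
by case: (eqVneq (g t) u) => [->|]; rewrite ?andbT ?andbF.
Qed.

Lemma marg_comp_eq {U V : finType} f f' (g : T -> U) (h : U -> V) :
  marg f g = marg f' g -> marg f (fun t => h (g t)) = marg f' (fun t => h (g t)).
Proof. by move=> e; apply: funext => v; rewrite !marg_comp e. Qed.

End Marginals.

Definition xlnx {R : realType} (x : R) := x * ln x.

Section NegEntropy.
Context {R : realType} {T : finType}.
Implicit Types f : T -> R.

Definition negent {U : finType} f (g : T -> U) := \sum_u xlnx (marg f g u).

Lemma sum_mul_ln_pm {U : finType} f (g : T -> U) :
  \sum_t f t * ln (pm f g t) = negent f g.
Proof.
rewrite (partition_big g xpredT) //=; apply: eq_bigr => u _.
by rewrite /xlnx {2}/marg big_distrl /=; apply: eq_big => // t /eqP <-.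
Qed.

Lemma negent_equiv {U V : finType} f (g : T -> U) (g' : T -> V) :
  (forall s t, (g s == g t) = (g' s == g' t)) -> negent f g = negent f g'.
Proof.
move=> e; rewrite -!sum_mul_ln_pm; apply: eq_bigr => t _.
by congr (_ * ln _); rewrite /pm /marg; apply: eq_bigl => s; exact: e.
Qed.

Lemma negent_unit f : \sum_t f t = 1 -> negent f (fun _ => tt) = 0.
Proof.
move=> f1; rewrite /negent (eq_bigl (pred1 tt)); last by case.
by rewrite big_pred1_eq /marg (eq_bigl xpredT) // f1 /xlnx ln1 mulr0.
Qed.

End NegEntropy.

Lemma negent_marg {R : realType} {T U V : finType} (f : T -> R) (g : T -> U) (h : U -> V) :
  negent (marg f g) h = negent f (fun t => h (g t)).
Proof. by rewrite /negent; apply: eq_bigr => v _; rewrite (marg_comp f g). Qed.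

Section LogInequalities.
Context {R : realType}.

Lemma sub_le_mul_ln_div (a y : R) : 0 < a -> 0 < y -> a - y <= a * ln (a / y).
Proof.
move=> a0 y0.
have ln_le : ln (y / a) <= y / a - 1.
  have := @le_ln1Dx R (y / a - 1); rewrite [1 + _]addrC subrK; apply.
  by have := divr_gt0 y0 a0; lra.
have -> : ln (a / y) = - ln (y / a) by rewrite !ln_div ?posrE // opprB.
have e : a * (y / a) = y by field; rewrite gt_eqF.
rewrite mulrN lerNr opprB; apply: (le_trans (ler_wpM2l (ltW a0) ln_le)).
by rewrite mulrBr e mulr1.
Qed.

Lemma mul_ln_div_mul (x a b c : R) : 0 <= x -> x <= a -> x <= b -> x <= c ->
  x * ln (a / (b * c)) = x * ln a - x * ln b - x * ln c.
Proof.
move=> x0 xa xb xc; have [->|xn0] := eqVneq x 0; first by rewrite !mul0r; ring.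
have x_gt0 : 0 < x by rewrite lt_def xn0.
have a0 := lt_le_trans x_gt0 xa; have b0 := lt_le_trans x_gt0 xb.
have c0 := lt_le_trans x_gt0 xc.
rewrite ln_div ?posrE ?mulr_gt0 // lnM ?posrE //; ring.
Qed.

Lemma mul_ln_mul_div_mul (x a b c d : R) : 0 <= x -> x <= a -> x <= b -> x <= c -> x <= d ->
  x * ln (a * d / (b * c)) = x * ln a + x * ln d - x * ln b - x * ln c.
Proof.
move=> x0 xa xb xc xd; have [->|xn0] := eqVneq x 0; first by rewrite !mul0r; ring.
have x_gt0 : 0 < x by rewrite lt_def xn0.
have a0 := lt_le_trans x_gt0 xa; have b0 := lt_le_trans x_gt0 xb.
have c0 := lt_le_trans x_gt0 xc; have d0 := lt_le_trans x_gt0 xd.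
rewrite ln_div ?posrE ?mulr_gt0 // !lnM ?posrE //; ring.
Qed.

Lemma log_sum_ineq {I : finType} (P : pred I) (a b : I -> R) :
  (forall i, P i -> 0 <= a i) -> (forall i, P i -> 0 <= b i) ->
  (forall i, P i -> 0 < a i -> 0 < b i) ->
  (\sum_(i | P i) a i) * ln ((\sum_(i | P i) a i) / \sum_(i | P i) b i)
    <= \sum_(i | P i) a i * ln (a i / b i).
Proof.
move=> a0 b0 ab.
set A := \sum_(i | P i) a i; set B := \sum_(i | P i) b i.
have [A_eq0|A_neq0] := eqVneq A 0.
  rewrite A_eq0 mul0r big1 // => i Pi.
  by rewrite (psumr_eq0P a0 A_eq0) // mul0r.
have [i Pi ai_gt0] : exists2 i, P i & 0 < a i.
  apply: contrapT => hn; move/eqP: A_neq0; apply; apply: big1 => i Pi.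
  apply/eqP; rewrite eq_le a0 // andbT leNgt; apply/negP => h; by apply: hn; exists i.
have B_gt0 : 0 < B.
  apply: (lt_le_trans (ab _ Pi ai_gt0)); rewrite /B (bigD1 i) //= lerDl.
  by apply: sumr_ge0 => j /andP[Pj _]; apply: b0.
have A_gt0 : 0 < A by rewrite lt_def A_neq0 sumr_ge0.
have AB_gt0 : 0 < A / B by rewrite divr_gt0.
(* Gibbs's trick: compare each term with [b i * (A / B)], whose sum is [A]. *)
have sum_rescaled : \sum_(i | P i) (a i - b i * (A / B)) = 0.
  by rewrite sumrB -mulr_suml -/A -/B; field; rewrite gt_eqF.
rewrite -subr_ge0 mulr_suml -sumrB -[X in X <= _]sum_rescaled.
apply: ler_sum => j Pj.
have [->|aj_neq0] := eqVneq (a j) 0.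
  by rewrite !mul0r subr0 sub0r oppr_le0 mulr_ge0 // ?b0 // ltW.
have aj_gt0 : 0 < a j by rewrite lt_def aj_neq0 a0.
have bj_gt0 := ab _ Pj aj_gt0.
have := sub_le_mul_ln_div aj_gt0 (mulr_gt0 bj_gt0 AB_gt0).
rewrite !ln_div ?posrE ?mulr_gt0 ?invr_gt0 // lnM ?posrE // ln_div ?posrE //.
by move/le_trans; apply; rewrite le_eqVlt; apply/orP; left; apply/eqP; ring.
Qed.

End LogInequalities.

Section CoarseGraining.
Context {R : realType}.

Definition coarse_loss {U V : finType} (m : U -> R) (h : U -> V) :=
  \sum_u xlnx (m u) - negent m h.

Lemma coarse_lossE {U V : finType} (m : U -> R) (h : U -> V) : (forall u, 0 <= m u) ->
  coarse_loss m h = \sum_u m u * ln (m u / marg m h (h u)).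
Proof.
move=> m0; rewrite /coarse_loss -sum_mul_ln_pm -sumrB; apply: eq_bigr => u _.
have [->|mu_neq0] := eqVneq (m u) 0; first by rewrite /xlnx !mul0r subrr.
have mu_gt0 : 0 < m u by rewrite lt_def mu_neq0 m0.
have := lt_le_trans mu_gt0 (le_pm h u m0).
by rewrite /xlnx /pm => pm_gt0; rewrite ln_div ?posrE // mulrBr.
Qed.

Lemma coarse_loss_marg {T U V : finType} (f : T -> R) (g : T -> U) (h : U -> V) :
  coarse_loss (marg f g) h = negent f g - negent f (fun t => h (g t)).
Proof. by rewrite /coarse_loss negent_marg. Qed.

Lemma coarse_loss_convex {U V : finType} n (w : 'I_n -> R) (ms : 'I_n -> U -> R)
    (h : U -> V) :
  (forall i, 0 <= w i) -> (forall i u, 0 <= ms i u) ->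
  coarse_loss (fun u => \sum_i w i * ms i u) h <= \sum_i w i * coarse_loss (ms i) h.
Proof.
move=> w0 m0.
have mix0 u : 0 <= \sum_i w i * ms i u by apply: sumr_ge0 => i _; apply: mulr_ge0.
rewrite (coarse_lossE h mix0).
under [X in _ <= X]eq_bigr do rewrite coarse_lossE // mulr_sumr.
rewrite exchange_big /=; apply: ler_sum => u _.
have -> : marg (fun u => \sum_i w i * ms i u) h (h u) = \sum_i w i * marg (ms i) h (h u).
  by rewrite /marg exchange_big /=; apply: eq_bigr => i _; rewrite mulr_sumr.
apply: (le_trans (log_sum_ineq _ _ _)) => [i _|i _|i _ /= wm_gt0|].
- exact: mulr_ge0.
- by apply: mulr_ge0 => //; apply: marg_ge0.
- have wi_gt0 : 0 < w i.
    by rewrite lt_def w0 andbT; apply: contraTneq wm_gt0 => ->; rewrite mul0r ltxx.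
  have mi_gt0 : 0 < ms i u by move: wm_gt0; rewrite pmulr_rgt0.
  by rewrite mulr_gt0 // (lt_le_trans mi_gt0) // le_pm.
- apply: ler_sum => i _; have [->|wi_neq0] := eqVneq (w i) 0; first by rewrite !mul0r.
  by rewrite -mulf_div divff // mul1r mulrA.
Qed.

End CoarseGraining.

Section InformationMeasures.
Context {R : realType} {T : finType}.
Implicit Types f : T -> R.

Lemma MI_negent {A B : finType} f (gA : T -> A) (gB : T -> B) : (forall t, 0 <= f t) ->
  MI f gA gB = negent f (fun s => (gA s, gB s)) - negent f gA - negent f gB.
Proof.
move=> f0; rewrite /MI -!sum_mul_ln_pm -!sumrB; apply: eq_bigr => t _.
by rewrite mul_ln_div_mul // le_pm.
Qed.

Lemma CMI_negent {A B C : finType} f (gA : T -> A) (gB : T -> B) (gC : T -> C) :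
  (forall t, 0 <= f t) ->
  CMI f gA gB gC = negent f (fun s => (gA s, gB s, gC s)) + negent f gC
     - negent f (fun s => (gA s, gC s)) - negent f (fun s => (gB s, gC s)).
Proof.
move=> f0; rewrite /CMI -!sum_mul_ln_pm -big_split -!sumrB; apply: eq_bigr => t _.
by rewrite mul_ln_mul_div_mul // le_pm.
Qed.

End InformationMeasures.

Section ConditionalMIJoint.
Context {R : realType} {A B C : finType}.
Variable m : A * B * C -> R.
Hypothesis m0 : forall u, 0 <= m u.
Local Notation hAC := (fun u : A * B * C => (u.1.1, u.2)).
Local Notation hBC := (fun u : A * B * C => (u.1.2, u.2)).

Lemma sum_marg_BC_slice (v : A * C) :
  \sum_(u | hAC u == v) marg m hBC (hBC u) = marg m snd v.2.
Proof.
rewrite /marg.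
transitivity (\sum_u \sum_u' (if (hAC u == v) && (hBC u' == hBC u) then m u' else 0)).
  rewrite big_mkcond; apply: eq_bigr => u _.
  by case: (hAC u == v) => /=; [rewrite big_mkcond | rewrite big1].
rewrite exchange_big [RHS]big_mkcond /=; apply: eq_bigr => u' _.
case: v => a c /=; have [e|ne] := eqVneq u'.2 c.
  rewrite (bigD1 ((a, u'.1.2), c)) //= e !eqxx /= big1 ?addr0 //.
  move=> [[x y] z] /= ne'; case: ifP => // /andP[/eqP [hx hz] /eqP [hy _]].
  by move: ne'; rewrite hx hz hy eqxx.
apply: big1 => [[[x y] z]] _; case: ifP => // /andP[/eqP [_ hz] /eqP [_ hz']].
by move: ne; rewrite hz' hz eqxx.
Qed.

Lemma CMI_joint_ge0 :
  0 <= \sum_u xlnx (m u) + negent m snd - negent m hAC - negent m hBC.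
Proof.
have -> : \sum_u xlnx (m u) + negent m snd - negent m hAC - negent m hBC
    = coarse_loss m hBC - coarse_loss (marg m hAC) snd.
  by rewrite coarse_loss_marg /coarse_loss; ring.
rewrite subr_ge0 !coarse_lossE //; last by move=> v; apply: marg_ge0.
rewrite [X in _ <= X](partition_big hAC xpredT) //=; apply: ler_sum => v _.
have -> : marg (marg m hAC) snd v.2 = marg m snd v.2.
  exact: esym (marg_comp m hAC snd v.2).
have := @log_sum_ineq _ _ (fun u => hAC u == v) m (fun u => marg m hBC (hBC u)).
rewrite sum_marg_BC_slice; apply => [u _|u _|u _ mu_gt0] //.
- exact: marg_ge0.
- exact: lt_le_trans mu_gt0 (le_pm _ _ m0).
Qed.

End ConditionalMIJoint.

Lemma CMI_ge0 {R : realType} {T A B C : finType} (f : T -> R)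
    (gA : T -> A) (gB : T -> B) (gC : T -> C) :
  (forall t, 0 <= f t) -> 0 <= CMI f gA gB gC.
Proof.
move=> f0; rewrite CMI_negent //.
have := CMI_joint_ge0 (marg_ge0 (fun s => (gA s, gB s, gC s)) ^~ f0).
by rewrite !negent_marg.
Qed.

Lemma MI_ge0 {R : realType} {T A B : finType} (f : T -> R) (gA : T -> A) (gB : T -> B) :
  is_dist f -> 0 <= MI f gA gB.
Proof.
move=> [f0 f1]; have := CMI_ge0 gA gB (fun _ => tt) f0.
have negent_tt (U : finType) (g : T -> U) : negent f (fun s => (g s, tt)) = negent f g.
  by apply: negent_equiv => s t; rewrite xpair_eqE eqxx andbT.
by rewrite CMI_negent // MI_negent // !negent_tt negent_unit // addr0.
Qed.

Lemma MI_le_pair {R : realType} {T A B C : finType} (f : T -> R)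
    (gA : T -> A) (gB : T -> B) (gC : T -> C) :
  (forall t, 0 <= f t) -> MI f gA gB <= MI f gA (fun s => (gB s, gC s)).
Proof.
move=> f0; have := CMI_ge0 gA gC gB f0; rewrite CMI_negent // !MI_negent //.
have -> : negent f (fun s => (gA s, (gB s, gC s))) = negent f (fun s => (gA s, gC s, gB s)).
  by apply: negent_equiv => s t; rewrite !xpair_eqE andbA andbAC.
have -> : negent f (fun s => (gB s, gC s)) = negent f (fun s => (gC s, gB s)).
  by apply: negent_equiv => s t; rewrite !xpair_eqE andbC.
lra.
Qed.

Ltac solve_proj_equiv :=
  move=> [[? ?] ?] [[? ?] ?]; unfold px12, py, px1, px2;
  rewrite /= ?xpair_eqE ?eqxx ?andbT;
  repeat match goal with |- context [?x == ?y] => case: (x == y) end; done.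

Section TripleEntropies.
Context {R : realType} {X1 X2 Y : finType}.
Local Notation T := (X1 * X2 * Y)%type.
Implicit Types f : T -> R.

Definition nH f := negent f (@id T).
Definition nH12 f := negent f px12.
Definition nH1 f := negent f (@px1 X1 X2 Y).
Definition nH2 f := negent f (@px2 X1 X2 Y).
Definition nHY f := negent f (@py X1 X2 Y).
Definition nH1Y f := negent f (fun t : T => (px1 t, py t)).
Definition nH2Y f := negent f (fun t : T => (px2 t, py t)).

Section Identities.
Variable f : T -> R.
Hypothesis f0 : forall t, 0 <= f t.

Lemma MI_X12_YE : MI f px12 py = nH f - nH12 f - nHY f.
Proof. by rewrite MI_negent //; congr (_ - _ - _); apply: negent_equiv; solve_proj_equiv. Qed.

Lemma CMI_X2_Y_X1E : CMI f px2 py px1 = nH f + nH1 f - nH12 f - nH1Y f.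
Proof.
by rewrite CMI_negent //; congr (_ + _ - _ - _); apply: negent_equiv; solve_proj_equiv.
Qed.

Lemma MI_X1_YE : MI f px1 py = nH1Y f - nH1 f - nHY f.
Proof. by rewrite MI_negent. Qed.

Lemma MI_X1_YX2E : MI f px1 (fun t => (py t, px2 t)) = nH f - nH1 f - nH2Y f.
Proof. by rewrite MI_negent //; congr (_ - _ - _); apply: negent_equiv; solve_proj_equiv. Qed.

Lemma MI_X2_YE : MI f px2 py = nH2Y f - nH2 f - nHY f.
Proof. by rewrite MI_negent. Qed.

Lemma MI_X2_X1E : MI f px2 px1 = nH12 f - nH2 f - nH1 f.
Proof. by rewrite MI_negent //; congr (_ - _ - _); apply: negent_equiv; solve_proj_equiv. Qed.

Lemma MI_X12_Y_chain : MI f px12 py = MI f px1 py + CMI f px2 py px1.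
Proof. by rewrite MI_X12_YE MI_X1_YE CMI_X2_Y_X1E; ring. Qed.

End Identities.

Lemma marg12_negent f f' : marg f px12 = marg f' px12 ->
  [/\ nH12 f = nH12 f', nH1 f = nH1 f' & nH2 f = nH2 f'].
Proof.
move=> e; rewrite /nH12 /nH1 /nH2 /negent e.
by rewrite (marg_comp_eq fst e) (marg_comp_eq snd e).
Qed.

End TripleEntropies.

Section MatchedMetric.
Context {R : realType} {X1 X2 Y : finType} (W : X1 -> X2 -> Y -> R).
Hypothesis HW : is_channel W.
Local Notation T := (X1 * X2 * Y)%type.

Definition Wt (t : T) := W t.1.1 t.1.2 t.2.

Lemma Wt_ge0 t : 0 <= Wt t.
Proof. by case: HW => W0 _; apply: W0. Qed.

Lemma joint_ge0 PX : (forall x, 0 <= PX x) -> forall t, 0 <= joint PX W t.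
Proof. by move=> PX0 t; rewrite mulr_ge0 // Wt_ge0. Qed.

Lemma marg12E (f : T -> R) x : marg f px12 x = \sum_y f (x, y).
Proof.
have e : \sum_(i | i == x) \sum_(y : Y) f (i, y) = \sum_(p : T | (p.1 == x) && true) f (p.1, p.2).
  by rewrite pair_big.
rewrite big_pred1_eq in e; rewrite e; apply: eq_big => [[a b]|[a b] _] //=.
by rewrite andbT.
Qed.

Lemma joint_marg12 PX x : marg (joint PX W) px12 x = PX x.
Proof. by rewrite marg12E /joint /= -mulr_sumr; case: HW => _ ->; rewrite mulr1. Qed.

Lemma joint_dist PX : is_dist PX -> is_dist (joint PX W).
Proof.
case=> PX0 PX1; split; first exact: joint_ge0.
rewrite (partition_big px12 xpredT) //= -[RHS]PX1; apply: eq_bigr => x _.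
by rewrite -(joint_marg12 PX x).
Qed.

Lemma joint_supp PX : (forall x, 0 <= PX x) -> forall t, joint PX W t != 0 -> 0 < Wt t.
Proof.
move=> PX0 t; rewrite /joint mulf_eq0 negb_or => /andP[_ Wt_neq0].
by rewrite lt_def Wt_neq0 Wt_ge0.
Qed.

Lemma EqE (f : T -> R) : (forall t, f t != 0 -> 0 < Wt t) ->
  Eq W f = (\sum_t f t * ln (Wt t))%:E.
Proof.
move=> supp; rewrite /Eq -sumEFin; apply: eq_bigr => t _.
case: eqP => [->|/eqP ft_neq0]; first by rewrite mul0r.
by rewrite /qmatch -/(Wt t) (supp t ft_neq0) EFinM.
Qed.

Lemma Eq_fin_supp (f : T -> R) (c : R) : (forall t, 0 <= f t) -> (c%:E <= Eq W f)%E ->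
  forall t, f t != 0 -> 0 < Wt t.
Proof.
move=> f0 c_le t ft_neq0; have [//|Wt_le0] := ltP 0 (Wt t).
have ft_gt0 : 0 < f t by rewrite lt_def ft_neq0 f0.
suff : Eq W f = -oo%E by move=> Eq_Ny; move: c_le; rewrite Eq_Ny leeNy_eq.
rewrite /Eq (bigD1 t) //= ifN // /qmatch -/(Wt t) ifN; last by rewrite -leNgt.
by rewrite mulrNy gtr0_sg // mul1e addNye.
Qed.

Lemma sum_Wt_pm12 (f : T -> R) : is_dist f -> \sum_t Wt t * pm f px12 t = 1.
Proof.
case=> f0 f1; rewrite /pm /Wt.
transitivity (\sum_x \sum_y W x.1 x.2 y * marg f px12 x).
  by rewrite pair_big; apply: eq_bigl => -[].
transitivity (\sum_x marg f px12 x).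
  by apply: eq_bigr => x _; rewrite -mulr_suml; case: HW => _ ->; rewrite mul1r.
by rewrite -f1 [RHS](partition_big px12 xpredT).
Qed.

Lemma sum_ln_Wt_le (f : T -> R) : is_dist f -> (forall t, f t != 0 -> 0 < Wt t) ->
  \sum_t f t * ln (Wt t) <= nH f - nH12 f.
Proof.
move=> fd supp; have f0 := fd.1; rewrite /nH /nH12 -!sum_mul_ln_pm.
apply: (@le_trans _ _ (\sum_t (f t * ln (pm f id t) - f t * ln (pm f px12 t)
                                + (Wt t * pm f px12 t - f t)))); last first.
  by rewrite big_split /= sumrB [X in _ + X]sumrB sum_Wt_pm12 // fd.2 subrr addr0.
apply: ler_sum => t _; rewrite pm_id.
have [->|ft_neq0] := eqVneq (f t) 0.
  by rewrite !mul0r !subrr add0r subr0 mulr_ge0 // ?Wt_ge0 // (le_trans (f0 t)) // le_pm.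
have ft_gt0 : 0 < f t by rewrite lt_def ft_neq0 f0.
have Wt_gt0 := supp t ft_neq0.
have pm_gt0 : 0 < pm f px12 t := lt_le_trans ft_gt0 (le_pm _ _ f0).
have := sub_le_mul_ln_div ft_gt0 (mulr_gt0 Wt_gt0 pm_gt0).
rewrite ln_div ?posrE ?mulr_gt0 // lnM ?posrE // !mulrBr mulrDr; lra.
Qed.

Lemma sum_ln_Wt_joint PX : is_dist PX ->
  \sum_t joint PX W t * ln (Wt t) = nH (joint PX W) - nH12 (joint PX W).
Proof.
move=> [PX0 _]; rewrite /nH /nH12 -!sum_mul_ln_pm -sumrB; apply: eq_bigr => t _.
rewrite pm_id /pm joint_marg12.
have [->|Pt_neq0] := eqVneq (joint PX W t) 0; first by rewrite !mul0r subrr.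
have Wt_gt0 := joint_supp PX0 Pt_neq0.
move: Pt_neq0; rewrite /joint mulf_eq0 negb_or => /andP[PXt_neq0 _].
have PXt_gt0 : 0 < PX t.1 by rewrite lt_def PXt_neq0 PX0.
by rewrite lnM ?posrE // -/(Wt t); ring.
Qed.

(* Gibbs's inequality bounds [E_f log W] by [- H_f(Y|X1,X2)], with equality at [f = P]:
   the metric constraint of [Gq] forces [H_f(Y|X1,X2) <= H_P(Y|X1,X2)]. *)
Lemma Gq_negent_cond PX f : is_dist PX -> Gq W (joint PX W) f ->
  nH (joint PX W) - nH12 (joint PX W) <= nH f - nH12 f.
Proof.
move=> PXd [fd [_ Eq_le]].
rewrite (EqE (joint_supp PXd.1)) in Eq_le.
have supp_f := Eq_fin_supp fd.1 Eq_le.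
rewrite (EqE supp_f) lee_fin in Eq_le.
by rewrite -sum_ln_Wt_joint //; apply: (le_trans Eq_le); apply: sum_ln_Wt_le.
Qed.

End MatchedMetric.

Section Emin.
Context {R : realType} {X1 X2 Y : finType}.
Local Notation T := (X1 * X2 * Y)%type.
Implicit Types (S : set (T -> R)) (F : (T -> R) -> R).

Lemma emin_ge S F (c : R) : (forall f, S f -> c <= F f) -> (c%:E <= emin S F)%E.
Proof. by move=> c_le; apply/ereal_infP => _ [f Sf <-]; rewrite lee_fin c_le. Qed.

Lemma emin_le S F f : S f -> (emin S F <= (F f)%:E)%E.
Proof. by move=> Sf; apply: ge_ereal_inf; exists (F f)%:E => //; exists f. Qed.

Lemma emin_attained S F f : S f -> (forall g, S g -> F f <= F g) -> emin S F = (F f)%:E.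
Proof. by move=> Sf F_ge; apply/eqP; rewrite eq_le emin_le // emin_ge. Qed.

Lemma le_emin_le S F (c : R) f : S f -> (c%:E <= emin S F)%E -> c <= F f.
Proof. by move=> Sf c_le; rewrite -lee_fin (le_trans c_le) // emin_le. Qed.

End Emin.

Definition Icond {R : realType} {X1 X2 Y : finType} (W : X1 -> X2 -> Y -> R) PX :=
  CMI (joint PX W) px2 py px1.
Definition Isum {R : realType} {X1 X2 Y : finType} (W : X1 -> X2 -> Y -> R) PX :=
  MI (joint PX W) px12 py.
Definition Rmatch_at {R : realType} {X1 X2 Y : finType} (W : X1 -> X2 -> Y -> R) PX :
  set (R * R) :=
  [set r | 0 <= r.1 /\ 0 <= r.2 /\ r.2 <= Icond W PX /\ r.1 + r.2 <= Isum W PX].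

Section RegionsAtJoint.
Context {R : realType} {X1 X2 Y : finType} (W : X1 -> X2 -> Y -> R).
Hypothesis HW : is_channel W.
Variable PX : (X1 * X2)%type -> R.
Hypothesis PXd : is_dist PX.
Local Notation P := (joint PX W).

Let P0 : forall t, 0 <= P t := (joint_dist HW PXd).1.

Lemma joint_Gq : Gq W P P.
Proof. by split; [exact: joint_dist | split]. Qed.

Lemma joint_L0 : L0 W P P. Proof. by split => //; exact: joint_Gq. Qed.
Lemma joint_L1 : L1 W P P. Proof. by split => //; exact: joint_Gq. Qed.
Lemma joint_L2 : L2 W P P. Proof. by split => //; exact: joint_Gq. Qed.

Lemma Gq_negent f : Gq W P f ->
  [/\ forall t, 0 <= f t, nH P - nH12 P <= nH f - nH12 f,
      nH12 f = nH12 P, nH1 f = nH1 P & nH2 f = nH2 P].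
Proof.
move=> fG; have Hcond := Gq_negent_cond HW PXd fG.
by case: fG => fd [/marg12_negent[e12 e1 e2] _]; split => //; exact: fd.1.
Qed.

Lemma L2_CMI_ge f : L2 W P f -> Icond W PX <= CMI f px2 py px1.
Proof.
move=> [fG m1Y]; have [f0 Hcond e12 e1 _] := Gq_negent fG.
have e1Y : nH1Y f = nH1Y P by rewrite /nH1Y /negent m1Y.
rewrite /Icond !CMI_X2_Y_X1E //; lra.
Qed.

Lemma L1_MI_ge f : L1 W P f ->
  MI P px1 (fun t => (py t, px2 t)) <= MI f px1 (fun t => (py t, px2 t)).
Proof.
move=> [fG m2Y]; have [f0 Hcond e12 e1 _] := Gq_negent fG.
have e2Y : nH2Y f = nH2Y P by rewrite /nH2Y /negent m2Y.
rewrite !MI_X1_YX2E //; lra.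
Qed.

Lemma L0_MI_ge f : L0 W P f -> Isum W PX <= MI f px12 py.
Proof.
move=> [fG mY]; have [f0 Hcond e12 _ _] := Gq_negent fG.
have eY : nHY f = nHY P by rewrite /nHY /negent mY.
rewrite /Isum !MI_X12_YE //; lra.
Qed.

Lemma L0_R1''_obj_ge f s : L0 W P f ->
  Isum W PX - s <= MI f px1 py + Num.max 0 (CMI f px2 py px1 - s).
Proof.
move=> fL0; have Isum_le := L0_MI_ge fL0; have [f0 _ _ _ _] := Gq_negent fL0.1.
have : CMI f px2 py px1 - s <= Num.max 0 (CMI f px2 py px1 - s).
  by rewrite le_max lexx orbT.
rewrite MI_X12_Y_chain // in Isum_le; lra.
Qed.

Lemma L0_R2''_obj_ge f s : L0 W P f -> Isum W PX - s <=
  MI f px2 py - MI f px2 px1 + Num.max 0 (MI f px1 (fun t => (py t, px2 t)) - s).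
Proof.
move=> fL0; have Isum_le := L0_MI_ge fL0; have [f0 _ _ e1 e2] := Gq_negent fL0.1.
have eY : nHY f = nHY P by rewrite /nHY /negent fL0.2.
set I1 := MI f px1 _.
have : I1 - s <= Num.max 0 (I1 - s) by rewrite le_max lexx orbT.
rewrite /Isum !MI_X12_YE // in Isum_le.
rewrite /I1 /Isum MI_X2_YE // MI_X2_X1E // MI_X1_YX2E // MI_X12_YE //; lra.
Qed.

Lemma R1'_joint : R1' W P = (MI P px1 (fun t => (py t, px2 t)))%:E.
Proof. exact: emin_attained joint_L1 L1_MI_ge. Qed.

Lemma R2'_joint : R2' W P = (Icond W PX)%:E.
Proof. exact: emin_attained joint_L2 L2_CMI_ge. Qed.

Lemma Rsup_tilde_joint : Rsup_tilde W P = Rmatch_at W PX.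
Proof.
apply/seteqP; split => r [r1_ge0 [r2_ge0 [r2_le r12_le]]]; do 2 split => //.
- have r2_le' : r.2 <= Icond W PX := le_emin_le joint_L2 r2_le.
  split => //; have [r1_ge|r1_lt] := leP (MI P px1 py) r.1.
    by apply: (le_emin_le _ r12_le); split => //; exact: joint_L0.
  rewrite /Isum MI_X12_Y_chain //; rewrite /Icond in r2_le'; lra.
- split; first by apply: emin_ge => f /L2_CMI_ge; exact: le_trans.
  by apply: emin_ge => f [/L0_MI_ge + _]; exact: le_trans.
Qed.

Lemma Rbin_star_joint : Rbin_star W P = Rmatch_at W PX.
Proof.
have I1_ge0 : 0 <= MI P px1 (fun t => (py t, px2 t)) := MI_ge0 _ _ (joint_dist HW PXd).
have I1_le : MI P px1 py <= MI P px1 (fun t => (py t, px2 t)) := MI_le_pair _ _ _ P0.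
have Isum_split : Isum W PX = MI P px1 py + Icond W PX := MI_X12_Y_chain P0.
apply/seteqP; split => r.
  move=> [r1a [r1b [r1a_ge0 [r1b_ge0 [r2_ge0 [r1E [h1 [h2 h3]]]]]]]].
  rewrite R1'_joint lee_fin in h1; rewrite R2'_joint lee_fin in h2.
  do 3 (split; first lra).
  case: h3 => /(le_emin_le joint_L0).
    have -> : Num.max 0 (Icond W PX - (r1b + r.2)) = Icond W PX - (r1b + r.2).
      by apply/max_idPr; lra.
    lra.
  have -> : Num.max 0 (MI P px1 (fun t => (py t, px2 t)) - r1a) =
            MI P px1 (fun t => (py t, px2 t)) - r1a by apply/max_idPr; lra.
  rewrite /Isum MI_X12_YE // MI_X2_YE // MI_X2_X1E // MI_X1_YX2E //; lra.
move=> [r1_ge0 [r2_ge0 [r2_le r12_le]]].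
(* Bin as much of [r.1] as [I(X2;Y|X1)] leaves room for. *)
pose r1a := Num.max 0 (r.1 + r.2 - Icond W PX).
have r1a_ge0 : 0 <= r1a by rewrite le_max lexx.
have r1a_ge : r.1 + r.2 - Icond W PX <= r1a by rewrite le_max lexx orbT.
have r1a_le : r1a <= r.1 by rewrite ge_max r1_ge0 /=; lra.
have r1a_cases : r1a = 0 \/ r1a = r.1 + r.2 - Icond W PX.
  by rewrite /r1a; case: leP => _; [right | left].
exists r1a, (r.1 - r1a); rewrite R1'_joint R2'_joint !lee_fin.
do 3 (split; first lra); split; first ring.
split; first by case: r1a_cases => ->; lra.
split; first lra.
by left; apply: emin_ge => f fL0; apply: le_trans (L0_R1''_obj_ge _ fL0); lra.
Qed.

End RegionsAtJoint.

Section Concavity.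
Context {R : realType} {X1 X2 Y : finType} (W : X1 -> X2 -> Y -> R).
Hypothesis HW : is_channel W.
Local Notation T := (X1 * X2 * Y)%type.

(* The first term is linear in [PX] and [coarse_loss] is convex. *)
Lemma IcondE PX : is_dist PX -> Icond W PX =
  \sum_t joint PX W t * ln (Wt W t) - coarse_loss (marg (joint PX W) (fun t => (px1 t, py t))) fst.
Proof.
move=> PXd; have P0 := (joint_dist HW PXd).1.
rewrite /Icond CMI_X2_Y_X1E // sum_ln_Wt_joint // coarse_loss_marg /nH1Y /nH1; ring.
Qed.

Lemma IsumE PX : is_dist PX -> Isum W PX =
  \sum_t joint PX W t * ln (Wt W t) - coarse_loss (marg (joint PX W) py) (fun _ => tt).
Proof.
move=> PXd; have [P0 P1] := joint_dist HW PXd.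
rewrite /Isum MI_X12_YE // sum_ln_Wt_joint // coarse_loss_marg negent_unit //.
by rewrite /nHY; ring.
Qed.

Variables (n : nat) (w : 'I_n -> R) (PXs : 'I_n -> (X1 * X2)%type -> R).
Hypotheses (w0 : forall i, 0 <= w i) (w1 : \sum_i w i = 1).
Hypothesis PXsd : forall i, is_dist (PXs i).
Let PXm x := \sum_i w i * PXs i x.

Lemma mixture_dist : is_dist PXm.
Proof.
split => [x|]; first by apply: sumr_ge0 => i _; rewrite mulr_ge0 // (PXsd i).1.
rewrite /PXm exchange_big /= -[RHS]w1; apply: eq_bigr => i _.
by rewrite -mulr_sumr (PXsd i).2 mulr1.
Qed.

Lemma joint_mixture t : joint PXm W t = \sum_i w i * joint (PXs i) W t.
Proof. by rewrite /joint /PXm mulr_suml; apply: eq_bigr => i _; rewrite mulrA. Qed.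

Lemma sum_ln_Wt_mixture : \sum_t joint PXm W t * ln (Wt W t) =
  \sum_i w i * \sum_t joint (PXs i) W t * ln (Wt W t).
Proof.
under eq_bigr do rewrite joint_mixture mulr_suml.
rewrite exchange_big /=; apply: eq_bigr => i _.
by rewrite mulr_sumr; apply: eq_bigr => t _; rewrite mulrA.
Qed.

Lemma coarse_loss_mixture {U V : finType} (g : T -> U) (h : U -> V) :
  coarse_loss (marg (joint PXm W) g) h <= \sum_i w i * coarse_loss (marg (joint (PXs i) W) g) h.
Proof.
have -> : marg (joint PXm W) g = fun u => \sum_i w i * marg (joint (PXs i) W) g u.
  apply: funext => u; rewrite /marg (eq_bigr _ (fun t _ => joint_mixture t)) exchange_big /=.
  by apply: eq_bigr => i _; rewrite mulr_sumr.
apply: coarse_loss_convex => // i u; apply: marg_ge0; exact: (joint_dist HW (PXsd i)).1.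
Qed.

Lemma Icond_concave : \sum_i w i * Icond W (PXs i) <= Icond W PXm.
Proof.
rewrite IcondE; last exact: mixture_dist.
under eq_bigr do rewrite IcondE // mulrBr.
by rewrite sumrB sum_ln_Wt_mixture lerB // coarse_loss_mixture.
Qed.

Lemma Isum_concave : \sum_i w i * Isum W (PXs i) <= Isum W PXm.
Proof.
rewrite IsumE; last exact: mixture_dist.
under eq_bigr do rewrite IsumE // mulrBr.
by rewrite sumrB sum_ln_Wt_mixture lerB // coarse_loss_mixture.
Qed.

End Concavity.

Lemma conv2_Rmatch {R : realType} {X1 X2 Y : finType} (W : X1 -> X2 -> Y -> R) :
  is_channel W -> conv2 (Rmatch W) = Rmatch W.
Proof.
move=> HW; apply/seteqP; split; last first.
  move=> r Rr; exists 1%N, (fun _ => 1), (fun _ => r); split => //.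
  by rewrite big_ord1; split => //; split => //; rewrite !big_ord1 !mul1r; case: r Rr.
move=> _ [n [w [z [w0 [w1 [zR ->]]]]]].
have /choice [PXs PXsz] := zR.
have PXsd i : is_dist (PXs i) by case: (PXsz i).
exists (fun x => \sum_i w i * PXs i x); split; first exact: mixture_dist.
have zi_ge0 i : 0 <= (z i).1 /\ 0 <= (z i).2 by case: (PXsz i) => _ [? []].
have z2_le i : (z i).2 <= Icond W (PXs i) by case: (PXsz i) => _ [_ [_ []]].
have z12_le i : (z i).1 + (z i).2 <= Isum W (PXs i) by case: (PXsz i) => _ [_ [_ []]].
split; first by apply: sumr_ge0 => i _; rewrite mulr_ge0 // (zi_ge0 i).1.
split; first by apply: sumr_ge0 => i _; rewrite mulr_ge0 // (zi_ge0 i).2.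
split.
  apply: le_trans (Icond_concave HW w0 w1 PXsd).
  by apply: ler_sum => i _; apply: ler_wpM2l.
apply: le_trans (Isum_concave HW w0 w1 PXsd).
by rewrite /= -big_split /=; apply: ler_sum => i _; rewrite -mulrDr ler_wpM2l.
Qed.

Lemma abs_xlnx_lt {R : realType} (t : R) : 0 < t < 1 -> `|xlnx t| < 2 * Num.sqrt t.
Proof.
case/andP=> t_gt0 t_lt1; set s := Num.sqrt t.
have s_gt0 : 0 < s by rewrite sqrtr_gt0.
have ss : s * s = t by rewrite -expr2 sqr_sqrtr // ltW.
have ln_le0 : ln t <= 0 by apply: ln_le0; apply: ltW.
have lnV_lt : - ln s < s^-1 by rewrite -lnV ?posrE //; apply: ln_sublinear; rewrite invr_gt0.
have lnt : ln t = 2 * ln s by rewrite -ss lnM ?posrE //; ring.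
rewrite /xlnx ler0_norm; last by rewrite mulr_ge0_le0 // ltW.
have : s * s * (- ln s) < s * s * s^-1 by rewrite ltr_pM2l // mulr_gt0.
rewrite mulfK ?gt_eqF // ss lnt; lra.
Qed.

Lemma xlnx_continuous {R : realType} : continuous (@xlnx R).
Proof.
move=> x; have [x_lt0|x_gt0|->] := ltgtP x 0.
- apply: near_cst_continuous; near=> y.
  rewrite /xlnx ln0 ?mulr0 //; apply: ltW; near: y; exact: lt_nbhsl.
- by apply: continuousM; [exact: cvg_id | exact: continuous_ln].
apply/cvgrPdist_lt => e e_gt0; rewrite /xlnx mul0r.
apply/nbhs_ballP; exists (Num.min 1 ((e / 2) ^+ 2)).
  by rewrite /= lt_min ltr01 exprn_gt0 // divr_gt0.
move=> t; rewrite /ball /= sub0r normrN lt_min => /andP[t_lt1 t_lte].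
have [t_le0|t_gt0] := leP t 0; first by rewrite ln0 // mulr0 subr0 normr0.
rewrite sub0r normrN; rewrite gtr0_norm // in t_lt1 t_lte.
have /abs_xlnx_lt : 0 < t < 1 by rewrite t_gt0 t_lt1.
rewrite /xlnx => /lt_trans; apply.
have : Num.sqrt t * Num.sqrt t < (e / 2) * (e / 2) by rewrite -expr2 sqr_sqrtr ?ltW // -expr2.
have := sqrtr_ge0 t; have : 0 < e / 2 by rewrite divr_gt0.
nra.
Unshelve. all: by end_near.
Qed.

Lemma continuous_sub {R : realType} {T : topologicalType} (f g : T -> R) :
  continuous f -> continuous g -> continuous (fun x => f x - g x).
Proof. by move=> cf cg x; exact: (@continuousB R R^o T f g x (cf x) (cg x)). Qed.

Lemma continuous_fun_max {R : realType} {T : topologicalType} (f g : T -> R) :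
  continuous f -> continuous g -> continuous (fun x => Num.max (f x) (g x)).
Proof. by move=> cf cg x; exact: (@continuous_max R T f g x (cf x) (cg x)). Qed.

Lemma compact_continuous_pos_lb {R : realType} {T : topologicalType} (A : set T) (d : T -> R) :
  compact A -> continuous d -> (forall x, A x -> 0 < d x) ->
  exists2 e, 0 < e & forall x, A x -> e <= d x.
Proof.
move=> cA cd d_gt0; have [A_nonempty|A_empty] := pselect (A !=set0).
  have [c /set_mem Ac c_min] := compact_EVT_min A_nonempty cA (continuous_subspaceT cd).
  by exists (d c); [exact: d_gt0 | move=> x Ax; apply: c_min; rewrite inE].
by exists 1 => // x Ax; case: A_empty; exists x.
Qed.

Section Closedness.
Context {R : realType} {X1 X2 Y : finType} (W : X1 -> X2 -> Y -> R).
Hypothesis HW : is_channel W.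
Local Notation T := (X1 * X2 * Y)%type.
Local Notation Tf := {ptws (X1 * X2)%type -> R}.

Lemma compact_dist : compact [set PX : Tf | is_dist PX].
Proof.
have -> : [set PX : Tf | is_dist PX] =
    [set f : Tf | forall x, `[0, 1]%classic (f x)] `&` [set f : Tf | \sum_x f x = 1].
  apply/seteqP; split => f.
    move=> [f0 f1]; split => // x; rewrite /= in_itv /= f0 /= -f1.
    by rewrite (bigD1 x) //= lerDl; apply: sumr_ge0.
  by move=> [f01 f1]; split => // x; have := f01 x; rewrite /= in_itv /= => /andP[].
apply: compact_closedI.
  exact: (@tychonoff _ (fun _ => R) (fun _ => `[0, 1]%classic) (fun _ => @segment_compact R 0 1)).
have -> : [set f : Tf | \sum_x f x = 1] = (fun f : Tf => \sum_x f x) @^-1` [set 1] by [].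
apply: preimage_closed; last exact: closed_eq.
move=> f _; apply: continuous_big => [|x _]; [exact: add_continuous | exact: proj_continuous].
Qed.

Lemma negent_joint_continuous {U : finType} (g : T -> U) :
  continuous (fun PX : Tf => negent (joint PX W) g).
Proof.
rewrite /negent /marg /joint; apply: continuous_big => [|u _]; first exact: add_continuous.
move=> PX; apply: continuous_comp; last exact: xlnx_continuous.
apply: continuous_big => [|t _]; first exact: add_continuous.
by move=> PX'; apply: continuousM; [exact: proj_continuous | exact: cst_continuous].
Qed.

Definition Icond_ent (PX : Tf) :=
  nH (joint PX W) + nH1 (joint PX W) - nH12 (joint PX W) - nH1Y (joint PX W).
Definition Isum_ent (PX : Tf) := nH (joint PX W) - nH12 (joint PX W) - nHY (joint PX W).

Lemma Icond_entE PX : is_dist PX -> Icond W PX = Icond_ent PX.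
Proof. by move=> PXd; rewrite /Icond CMI_X2_Y_X1E //; exact: (joint_dist HW PXd).1. Qed.

Lemma Isum_entE PX : is_dist PX -> Isum W PX = Isum_ent PX.
Proof. by move=> PXd; rewrite /Isum MI_X12_YE //; exact: (joint_dist HW PXd).1. Qed.

Lemma Icond_ent_continuous : continuous Icond_ent.
Proof.
apply: continuous_sub; [apply: continuous_sub; [move=> PX; apply: continuousD|]|];
  exact: negent_joint_continuous.
Qed.

Lemma Isum_ent_continuous : continuous Isum_ent.
Proof.
by apply: continuous_sub; [apply: continuous_sub|]; exact: negent_joint_continuous.
Qed.

Lemma Rmatch_closed : closed (Rmatch W).
Proof.
move=> r r_cl; apply: contrapT => r_out.
(* [d PX <= 0] iff [r] lies in [Rmatch_at W PX]. *)
pose d (PX : Tf) : R := Num.max (Num.max (- r.1) (- r.2))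
                            (Num.max (r.2 - Icond_ent PX) (r.1 + r.2 - Isum_ent PX)).
have d_cont : continuous d.
  apply: continuous_fun_max; apply: continuous_fun_max.
  - exact: cst_continuous.
  - exact: cst_continuous.
  - by apply: continuous_sub; [exact: cst_continuous | exact: Icond_ent_continuous].
  - by apply: continuous_sub; [exact: cst_continuous | exact: Isum_ent_continuous].
have d_gt0 PX : is_dist PX -> 0 < d PX.
  move=> PXd; rewrite ltNge !ge_max; apply/negP => /andP[/andP[h1 h2] /andP[h3 h4]].
  apply: r_out; exists PX; split => //; change (Rmatch_at W PX r).
  by rewrite /Rmatch_at /= (Icond_entE PXd) (Isum_entE PXd); do 3 (split; first lra); lra.
have [e e_gt0 d_ge] := compact_continuous_pos_lb compact_dist d_cont d_gt0.
have e3_gt0 : 0 < e / 3 by rewrite divr_gt0.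
have [r' [[PX [PXd Rr']] [/= b1 b2]]] := r_cl _ (nbhsx_ballx r _ e3_gt0).
have [_ [_ [r2_le r12_le]]] : Rmatch_at W PX r' := Rr'.
move: b1 b2; rewrite /ball /= !ltr_norml => /andP[b1 b1'] /andP[b2 b2'].
have := d_ge PX PXd; apply/negP; rewrite -ltNge !gt_max.
rewrite -(Icond_entE PXd) -(Isum_entE PXd).
by apply/andP; split; apply/andP; split; lra.
Qed.

End Closedness.

Lemma union_joint_Rmatch {R : realType} {X1 X2 Y : finType} (W : X1 -> X2 -> Y -> R)
    (S : ((X1 * X2 * Y)%type -> R) -> set (R * R)) :
  (forall PX, is_dist PX -> S (joint PX W) = Rmatch_at W PX) ->
  [set r | exists PX, is_dist PX /\ S (joint PX W) r] = Rmatch W.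
Proof.
move=> SE; apply/seteqP; split => r [PX [PXd Sr]]; exists PX; split => //.
  by rewrite SE in Sr.
by rewrite SE.
Qed.

Theorem proposition1 (R : realType) (X1 X2 Y : finType) (W : X1 -> X2 -> Y -> R)
  (HW : is_channel W) :
  Rsup W = Rbin W /\ Rbin W = Rmatch W.
Proof.
have Esup := union_joint_Rmatch (Rsup_tilde_joint HW).
have Ebin := union_joint_Rmatch (Rbin_star_joint HW).
rewrite /Rsup /Rbin Esup Ebin conv2_Rmatch //.
by rewrite -(proj1 (closure_id _) (Rmatch_closed HW)).
Qed.
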